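(* Let $G$ and $H$ be finite simple graphs, let $U\subseteq V_G$, and let $k$ be an integer. Then $$\gamma^d_k(G(U)\sqcap H)\leq \gamma^d_{k}(G)\,n(H),$$ where $n(H)=|V_H|$ and $\infty\cdot n(H)=\infty$.
   Context: All graphs are finite and simple. For a graph $G=(V_G,E_G)$, $S\subseteq V_G$ and $v\in V_G$, let $N_S(v)=\{u\in S: uv\in E_G\}$ and $\bar S=V_G\setminus S$. A set $D\subseteq V_G$ is dominating if every vertex outside $D$ has a neighbor in $D$. For an integer $k$, a nonempty set $S\subseteq V_G$ is a global defensive $k$-alliance (GD$k$-A) in $G$ if $S$ is dominating and $|N_S(v)|\ge |N_{\bar S}(v)|+k$ for every $v\in S$. The number $\gamma^d_k(G)$ is the minimum cardinality of a GD$k$-A in $G$, and $\gamma^d_k(G)=\infty$ if $G$ has none. For $U\subseteq V_G$, the generalized hierarchical product $G(U)\sqcap H$ has vertex set $V_G\times V_H$, with $(g,h)$ and $(g',h')$ adjacent iff either $g=g'\in U$ and $hh'\in E_H$, or $gg'\in E_G$ and $h=h'$. *)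

From mathcomp Require Import all_boot all_order all_algebra.
Set Implicit Arguments. Unset Strict Implicit. Unset Printing Implicit Defensive.
Import Order.TTheory GRing.Theory Num.Theory.

Definition simple_graph (T : finType) (e : rel T) : Prop :=
  symmetric e /\ irreflexive e.

Definition nbhd_in (T : finType) (e : rel T) (S : {set T}) (v : T) : {set T} :=
  [set u in S | e v u].

Definition dominating (T : finType) (e : rel T) (S : {set T}) : bool :=
  [forall v, (v \notin S) ==> [exists u in S, e v u]].

Definition is_gdka (T : finType) (e : rel T) (k : int) (S : {set T}) : bool :=
  [&& S != set0, dominating e S &
      [forall v in S,
        (#|nbhd_in e (~: S) v|%:Z + k <= #|nbhd_in e S v|%:Z)%R]].

(* gamma^d_k(G) : None encodes infinity *)
Definition gdk_number (T : finType) (e : rel T) (k : int) : option nat :=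
  if [exists S : {set T}, is_gdka e k S]
  then Some (\big[minn/#|T|]_(S : {set T} | is_gdka e k S) #|S|)
  else None.

Definition ole (a b : option nat) : Prop :=
  match a, b with
  | _, None => True
  | None, Some _ => False
  | Some x, Some y => (x <= y)%N
  end.

Definition omuln (a : option nat) (n : nat) : option nat :=
  match a with Some x => Some (x * n)%N | None => None end.

Definition hier_prod (TG TH : finType) (eG : rel TG) (eH : rel TH)
  (U : {set TG}) : rel (TG * TH) :=
  fun x y => ((x.1 == y.1) && (x.1 \in U) && eH x.2 y.2)
             || (eG x.1 y.1 && (x.2 == y.2)).

From mathcomp Require Import all_boot all_order all_algebra.
Import Order.TTheory GRing.Theory Num.Theory.

Set Implicit Arguments.
Unset Strict Implicit.
Unset Printing Implicit Defensive.

(* If S is a global defensive k-alliance of G, then so is S × V_H in G(U) ⊓ H.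
   A vertex (g, h) with g ∈ S keeps, inside the layer V_G × {h}, a copy of each
   neighbour of g; its H-neighbours (g, h') stay in the fibre over g, hence in
   S × V_H. So it has at least as many neighbours inside and at most as many
   outside as g has in G. *)

Section AllianceNumber.

Variables (T : finType) (e : rel T) (k : int).

Lemma gdk_number_le (S : {set T}) :
  is_gdka e k S -> exists2 m, gdk_number e k = Some m & (m <= #|S|)%N.
Proof.
move=> gdkaS; rewrite /gdk_number (introT existsP) //; last by exists S.
by eexists; first reflexivity; exact: (bigmin_le_cond #|T| (fun S : {set T} => #|S|) gdkaS).
Qed.

Lemma gdk_number_attained (m : nat) :
  gdk_number e k = Some m -> exists2 S, is_gdka e k S & #|S| = m.
Proof.
rewrite /gdk_number; case: ifP => // /existsP[S0 gdkaS0] [<-].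
rewrite (bigmin_eq_arg #|T| S0 _ (fun S : {set T} => #|S|) gdkaS0); last first.
  by move=> S _; exact: max_card.
by case: arg_minP => // S gdkaS _; exists S.
Qed.

End AllianceNumber.

Section HierarchicalProduct.

Variables (TG TH : finType) (eG : rel TG) (eH : rel TH) (U : {set TG}).
Let eGH := hier_prod eG eH U.

Lemma hier_prod_layer_edge (g g' : TG) (h : TH) : eG g g' -> eGH (g, h) (g', h).
Proof. by move=> egg'; rewrite /eGH /hier_prod /= egg' eqxx orbT. Qed.

Lemma mem_setXT (S : {set TG}) (g : TG) (h : TH) :
  ((g, h) \in setX S [set: TH]) = (g \in S).
Proof. by rewrite inE /= in_setT andbT. Qed.

Lemma leq_card_nbhd_hier_prod (S : {set TG}) (g : TG) (h : TH) :
  (#|nbhd_in eG S g| <= #|nbhd_in eGH (setX S [set: TH]) (g, h)|)%N.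
Proof.
rewrite -(card_imset _ (fun a b (E : (a, h) = (b, h)) => congr1 fst E)).
apply/subset_leq_card/subsetP => _ /imsetP[g' + ->].
rewrite !inE => /andP[g'S /hier_prod_layer_edge->].
by rewrite /= g'S.
Qed.

Lemma leq_card_nbhdC_hier_prod (S : {set TG}) (g : TG) (h : TH) : g \in S ->
  (#|nbhd_in eGH (~: setX S [set: TH]) (g, h)| <= #|nbhd_in eG (~: S) g|)%N.
Proof.
move=> gS; apply: leq_trans (leq_imset_card (fun g' => (g', h)) _).
apply/subset_leq_card/subsetP => -[g' h'].
rewrite !inE /= andbT /eGH /hier_prod /=.
case/andP=> g'S /orP[/andP[/andP[/eqP eqg _] _] | /andP[egg' /eqP<-]].
  by rewrite -eqg gS in g'S.
by apply/imsetP; exists g'; rewrite // !inE g'S.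
Qed.

Lemma gdka_hier_prod (k : int) (S : {set TG}) : (0 < #|TH|)%N ->
  is_gdka eG k S -> is_gdka eGH k (setX S [set: TH]).
Proof.
move=> THne /and3P[/set0Pn[g0 g0S] /forallP domS /forall_inP allianceS].
have [h0 _] : exists h0 : TH, h0 \in [set: TH].
  by apply/set0Pn; rewrite -card_gt0 cardsT.
apply/and3P; split.
- by apply/set0Pn; exists (g0, h0); rewrite mem_setXT.
- apply/forallP => -[g h]; rewrite mem_setXT; apply/implyP => gNS.
  have /exists_inP[g' g'S egg'] := implyP (domS g) gNS.
  by apply/exists_inP; exists (g', h); rewrite ?mem_setXT // hier_prod_layer_edge.
- apply/forall_inP => -[g h]; rewrite mem_setXT => gS.
  apply: le_trans (le_trans (allianceS g gS) _); last first.
    by rewrite lez_nat leq_card_nbhd_hier_prod.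
  by rewrite lerD2r lez_nat leq_card_nbhdC_hier_prod.
Qed.

End HierarchicalProduct.

Theorem mainTheorem1 (TG TH : finType) (eG : rel TG) (eH : rel TH)
  (hG : simple_graph eG) (hH : simple_graph eH) (hHne : (0 < #|TH|)%N)
  (U : {set TG}) (k : int) :
  ole (gdk_number (hier_prod eG eH U) k) (omuln (gdk_number eG k) #|TH|).
Proof.
case gdkG: (gdk_number eG k) => [m|]; last by case: (gdk_number _ k).
have [S gdkaS <-] := gdk_number_attained gdkG.
have [m' -> /= le_m'] := gdk_number_le (gdka_hier_prod eH U hHne gdkaS).
by move: le_m'; rewrite cardsX cardsT.
Qed.
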